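(* Let $\mathcal A$ be an NBA such that (1) $\sqsubseteq^{\mathrm{di}}\cap\sqsupseteq^{\mathrm{di}}=\mathrm{id}$, (2) $\sqsubseteq^{\mathrm{bw\text{-}di}}\cap\sqsupseteq^{\mathrm{bw\text{-}di}}=\mathrm{id}$, and (3) $\sqsubseteq^{\mathrm{di}}\cap\sqsubseteq^{\mathrm{bw\text{-}di}}=\mathrm{id}$. Then $\sqsubseteq^{\mathrm m}\cap\sqsupseteq^{\mathrm m}=\mathrm{id}$; in particular $\mathcal A/\!\sqsubseteq^{\mathrm m}$ is isomorphic to $\mathcal A$.
   Context: An NBA $\mathcal A=(\Sigma,Q,I,F,\delta)$ is assumed forward and backward complete. Direct simulation $\sqsubseteq^{\mathrm{di}}$: in the game from $(p_0,q_0)$, at round $i$ Spoiler picks $p_i\xrightarrow{\sigma_i}p_{i+1}$, Duplicator answers $q_i\xrightarrow{\sigma_i}q_{i+1}$; Duplicator wins if $p_i\in F\Rightarrow q_i\in F$ for all $i$. Backward direct simulation $\sqsubseteq^{\mathrm{bw\text{-}di}}$: same but with backward transitions $p_{i+1}\xrightarrow{\sigma_i}p_i$, $q_{i+1}\xrightarrow{\sigma_i}q_i$, and Duplicator wins if for all $i$, $p_i\in F\Rightarrow q_i\in F$ and $p_i\in I\Rightarrow q_i\in I$. In both cases $p\sqsubseteq q$ iff Duplicator has a winning strategy from $(p,q)$; these are preorders; $\sqsupseteq$ denotes the inverse relation. For relations $A,B$, $(x,y)\in A\circ B$ iff $\exists z$ with $(x,z)\in A$, $(z,y)\in B$. A relation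 $M\subseteq Q\times Q$ is a mediated simulation if $M\subseteq\ \sqsubseteq^{\mathrm{di}}\circ\sqsupseteq^{\mathrm{bw\text{-}di}}$ and $M\circ\sqsubseteq^{\mathrm{di}}\ \subseteq M$; $\sqsubseteq^{\mathrm m}$ is the union of all mediated simulations (itself a mediated simulation). $\mathrm{id}$ is the identity relation; quotient by a preorder merges its equivalence classes. *)

From mathcomp Require Import all_boot.
Set Implicit Arguments. Unset Strict Implicit. Unset Printing Implicit Defensive.

Record NBA (Sigma Q : finType) := {
  init : {set Q};
  acc : {set Q};
  delta : Q -> Sigma -> Q -> bool  (* delta p a q : transition p --a--> q *)
}.

Definition forward_complete (Sigma Q : finType) (A : NBA Sigma Q) : Prop :=
  forall (p : Q) (a : Sigma), exists q, delta A p a q.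
Definition backward_complete (Sigma Q : finType) (A : NBA Sigma Q) : Prop :=
  forall (q : Q) (a : Sigma), exists p, delta A p a q.

(* R is a direct-simulation relation: a positional winning region for Duplicator
   in the direct simulation game (safety game). *)
Definition is_di_sim (Sigma Q : finType) (A : NBA Sigma Q) (R : Q -> Q -> Prop) :=
  forall p q, R p q ->
    (p \in acc A -> q \in acc A) /\
    forall (a : Sigma) (p' : Q), delta A p a p' ->
      exists2 q', delta A q a q' & R p' q'.

Definition is_bwdi_sim (Sigma Q : finType) (A : NBA Sigma Q) (R : Q -> Q -> Prop) :=
  forall p q, R p q ->
    (p \in acc A -> q \in acc A) /\ (p \in init A -> q \in init A) /\
    forall (a : Sigma) (p' : Q), delta A p' a p ->
      exists2 q', delta A q' a q & R p' q'.

Definition di_sim (Sigma Q : finType) (A : NBA Sigma Q) (p q : Q) : Prop :=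
  exists R, is_di_sim A R /\ R p q.
Definition bwdi_sim (Sigma Q : finType) (A : NBA Sigma Q) (p q : Q) : Prop :=
  exists R, is_bwdi_sim A R /\ R p q.

Definition is_mediated_sim (Sigma Q : finType) (A : NBA Sigma Q) (M : Q -> Q -> Prop) :=
  (forall x y, M x y -> exists z, di_sim A x z /\ bwdi_sim A y z) /\
  (forall x y z, M x z -> di_sim A z y -> M x y).

Definition med_sim (Sigma Q : finType) (A : NBA Sigma Q) (p q : Q) : Prop :=
  exists M, is_mediated_sim A M /\ M p q.

From mathcomp Require Import all_boot.
Set Implicit Arguments. Unset Strict Implicit.

(* If [x] and [y] mediate each other, unfolding [y ⊑m x] gives [y ⊑di b ⊒bw-di x];
   closure of [⊑m] under [⊑di] turns [x ⊑m y] into [x ⊑m b], hence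
   [x ⊑di c ⊒bw-di b].  Then [x ⊑bw-di c] by transitivity, so [x = c] because
   [⊑di ∩ ⊑bw-di] is the identity, and [x = b] by antisymmetry of [⊑bw-di].
   Thus [y ⊑di x], symmetrically [x ⊑di y], and antisymmetry of [⊑di] concludes.
   Reflexivity holds because [⊑di] itself is a mediated simulation. *)

Section Simulations.

Variables (Sigma Q : finType) (A : NBA Sigma Q).

Lemma is_di_sim_eq : is_di_sim A eq.
Proof. by move=> p _ <-; split=> // a p' pp'; exists p'. Qed.

Lemma is_bwdi_sim_eq : is_bwdi_sim A eq.
Proof. by move=> p _ <-; split=> //; split=> // a p' p'p; exists p'. Qed.

Definition rel_comp (R1 R2 : Q -> Q -> Prop) (x z : Q) : Prop :=
  exists y, R1 x y /\ R2 y z.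

Lemma is_di_sim_comp R1 R2 :
  is_di_sim A R1 -> is_di_sim A R2 -> is_di_sim A (rel_comp R1 R2).
Proof.
move=> sim1 sim2 x z [y [xy yz]].
have [acc1 step1] := sim1 _ _ xy; have [acc2 step2] := sim2 _ _ yz.
split=> [/acc1 /acc2 //|a x' xx'].
have [y' yy' x'y'] := step1 _ _ xx'; have [z' zz' y'z'] := step2 _ _ yy'.
by exists z' => //; exists y'.
Qed.

Lemma is_bwdi_sim_comp R1 R2 :
  is_bwdi_sim A R1 -> is_bwdi_sim A R2 -> is_bwdi_sim A (rel_comp R1 R2).
Proof.
move=> sim1 sim2 x z [y [xy yz]].
have [acc1 [init1 step1]] := sim1 _ _ xy; have [acc2 [init2 step2]] := sim2 _ _ yz.
split=> [/acc1 /acc2 //|]; split=> [/init1 /init2 //|a x' x'x].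
have [y' y'y x'y'] := step1 _ _ x'x; have [z' z'z y'z'] := step2 _ _ y'y.
by exists z' => //; exists y'.
Qed.

Lemma di_sim_refl x : di_sim A x x.
Proof. by exists eq; split; [exact: is_di_sim_eq|]. Qed.

Lemma bwdi_sim_refl x : bwdi_sim A x x.
Proof. by exists eq; split; [exact: is_bwdi_sim_eq|]. Qed.

Lemma di_sim_trans x y z : di_sim A x y -> di_sim A y z -> di_sim A x z.
Proof.
move=> [R1 [sim1 xy]] [R2 [sim2 yz]].
by exists (rel_comp R1 R2); split; [exact: is_di_sim_comp | exists y].
Qed.

Lemma bwdi_sim_trans x y z : bwdi_sim A x y -> bwdi_sim A y z -> bwdi_sim A x z.
Proof.
move=> [R1 [sim1 xy]] [R2 [sim2 yz]].
by exists (rel_comp R1 R2); split; [exact: is_bwdi_sim_comp | exists y].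
Qed.

Lemma di_sim_mediated : is_mediated_sim A (di_sim A).
Proof.
split=> [x y xy|x y z xz zy]; first by exists y; split; [|exact: bwdi_sim_refl].
exact: di_sim_trans xz zy.
Qed.

Lemma med_sim_refl x : med_sim A x x.
Proof. exists (di_sim A); split; [exact: di_sim_mediated | exact: di_sim_refl]. Qed.

Lemma med_sim_mediator x y :
  med_sim A x y -> exists z, di_sim A x z /\ bwdi_sim A y z.
Proof. by move=> [M [[sub _] xy]]; exact: sub. Qed.

Lemma med_sim_di_trans x y z : med_sim A x y -> di_sim A y z -> med_sim A x z.
Proof.
move=> [M [medM xy]] yz; exists M; split=> //.
by case: medM => _ M_di_closed; exact: M_di_closed xy yz.
Qed.

Lemma med_sim_sym_di x y :
  (forall p q, bwdi_sim A p q -> bwdi_sim A q p -> p = q) ->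
  (forall p q, di_sim A p q -> bwdi_sim A p q -> p = q) ->
  med_sim A x y -> med_sim A y x -> di_sim A y x.
Proof.
move=> bw_antisym di_bw_id xy yx.
have [b [yb xb]] := med_sim_mediator yx.
have [c [xc bc]] := med_sim_mediator (med_sim_di_trans xy yb).
have xc' : bwdi_sim A x c := bwdi_sim_trans xb bc.
move: bc; rewrite -(di_bw_id _ _ xc xc') => bx.
by rewrite (bw_antisym _ _ xb bx).
Qed.

End Simulations.

Theorem lemma7p2 (Sigma Q : finType) (A : NBA Sigma Q) :
  forward_complete A -> backward_complete A ->
  (forall p q, di_sim A p q -> di_sim A q p -> p = q) ->
  (forall p q, bwdi_sim A p q -> bwdi_sim A q p -> p = q) ->
  (forall p q, di_sim A p q -> bwdi_sim A p q -> p = q) ->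
  forall p q, (med_sim A p q /\ med_sim A q p) <-> p = q.
Proof.
move=> _ _ di_antisym bw_antisym di_bw_id p q; split=> [[pq qp]|<-].
  by apply: di_antisym; exact: med_sim_sym_di.
by split; exact: med_sim_refl.
Qed.
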